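(* There exists a smooth $\varrho$-function, i.e. a $\varrho$-function $\varrho:[\omega_1]^2\to\omega$ such that for every limit ordinal $\lambda<\omega_1$ the numerical sequence $\left(\#F_n^\lambda/n\right)_n$ is bounded, where $F_n^\lambda=\{\beta<\lambda:\varrho(\beta,\lambda)\le n\}$.
   Context: A $\varrho$-function is a map $\varrho:[\omega_1]^2\to\omega$ (write $\varrho(\alpha,\beta)$ for $\alpha<\beta$) such that: (1) $\varrho(\alpha,\gamma)\le\max\{\varrho(\alpha,\beta),\varrho(\beta,\gamma)\}$ for all $\alpha<\beta<\gamma<\omega_1$; (2) $\varrho(\alpha,\beta)\le\max\{\varrho(\alpha,\gamma),\varrho(\beta,\gamma)\}$ for all $\alpha<\beta<\gamma<\omega_1$; (3) $\{\alpha<\beta:\varrho(\alpha,\beta)\le n\}$ is finite for all $\beta<\omega_1$ and $n\in\mathbb N$. *)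

(* omega_1 is axiomatised up to isomorphism: a strictly,
   totally, well-ordered type which is uncountable and all of whose proper
   initial segments are countable. *)
From Stdlib Require Import Arith List.
Import ListNotations.

Definition injective {A B : Type} (f : A -> B) : Prop :=
  forall x y, f x = f y -> x = y.

Record is_omega1 (W : Type) (lt : W -> W -> Prop) : Prop := {
  o1_irrefl : forall a, ~ lt a a;
  o1_trans  : forall a b c, lt a b -> lt b c -> lt a c;
  o1_total  : forall a b, lt a b \/ a = b \/ lt b a;
  o1_wf     : well_founded lt;
  o1_uncountable : ~ exists f : W -> nat, injective f;
  o1_segments_countable :
    forall a : W, exists f : {b : W | lt b a} -> nat, injective f
}.

Definition is_limit {W : Type} (lt : W -> W -> Prop) (l : W) : Prop :=
  (exists b, lt b l) /\ (forall b, lt b l -> exists c, lt b c /\ lt c l).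

(* rho-function on [W]^2; rho a b is only meaningful for lt a b *)
Definition is_rho_function {W : Type} (lt : W -> W -> Prop)
    (rho : W -> W -> nat) : Prop :=
  (forall a b c, lt a b -> lt b c -> rho a c <= Nat.max (rho a b) (rho b c)) /\
  (forall a b c, lt a b -> lt b c -> rho a b <= Nat.max (rho a c) (rho b c)) /\
  (forall (b : W) (n : nat), exists l : list W,
      forall a, lt a b -> rho a b <= n -> In a l).

Definition F_set {W : Type} (lt : W -> W -> Prop) (rho : W -> W -> nat)
    (n : nat) (lam : W) (b : W) : Prop :=
  lt b lam /\ rho b lam <= n.

Definition card_le {W : Type} (P : W -> Prop) (m : nat) : Prop :=
  forall l : list W, NoDup l -> (forall x, In x l -> P x) -> length l <= m.

Definition smooth {W : Type} (lt : W -> W -> Prop) (rho : W -> W -> nat) : Prop :=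
  forall lam, is_limit lt lam ->
    exists C : nat, forall n, 1 <= n -> card_le (F_set lt rho n lam) (C * n).

From Stdlib Require Import Arith List Lia ClassicalEpsilon FunctionalExtensionality.
Import ListNotations.

(* The columns rho(.,be) are built by transfinite recursion, keeping every
   column r sparse: for each c, eventually c * #{a < be | r a <= n} <= n.
   This is stronger than smoothness and, unlike smoothness, survives limits.
   At a successor the column of the predecessor is reused.  At a limit lam
   fix a cofinal sequence g_0 < g_1 < ... and, for a in the block
   [g_(k-1), g_k), set
     rho(a,lam) = max (M_k, rho(a,g_k), max {rho(g_i,a) | i < k, g_i < a}),
   where M_k increases and dominates k, the values rho(g_i,g_j) for
   i < j <= k, and the point from which column g_j is j-sparse.  For
   n >= M_c, any finite part of F_n^lam lies in F_n^(g_K) for some K >= c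
   with M_K <= n, hence c * #F_n^lam <= n. *)

Section WellFoundedChoice.

Variables (A B : Type) (lt : A -> A -> Prop) (b0 : B).
Hypothesis lt_wf : well_founded lt.
Variable P : A -> (A -> B) -> B -> Prop.
Hypothesis P_local : forall x f f' v,
  (forall y, lt y x -> f y = f' y) -> P x f v -> P x f' v.
Hypothesis P_extend : forall x f,
  (forall y, lt y x -> P y f (f y)) -> exists v, P x f v.

Let extend x (h : forall y, lt y x -> B) (y : A) : B :=
  match excluded_middle_informative (lt y x) with
  | left p => h y p
  | right _ => b0
  end.

Let step x (h : forall y, lt y x -> B) : B :=
  epsilon (inhabits b0) (P x (extend x h)).

Lemma wf_recursive_choice : exists f : A -> B, forall x, P x f (f x).
Proof.
  pose (f := Fix lt_wf (fun _ => B) step).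
  assert (f_eq : forall x, f x = step x (fun y _ => f y)).
  { intros x; refine (Fix_eq _ _ _ _ x); intros y h h' E.
    replace h' with h; [reflexivity|].
    apply functional_extensionality_dep; intros z.
    apply functional_extensionality_dep; intros p; apply E. }
  exists f; intros x; induction x as [x IH] using (well_founded_ind lt_wf).
  assert (agree : forall y, lt y x -> f y = extend x (fun y _ => f y) y).
  { intros y Hy; unfold extend; destruct (excluded_middle_informative _); tauto. }
  destruct (P_extend x f IH) as [v Hv].
  rewrite f_eq; apply (P_local x (extend x (fun y _ => f y))).
  - intros y Hy; symmetry; exact (agree y Hy).
  - apply epsilon_spec; exists v; exact (P_local x f _ v agree Hv).
Qed.

End WellFoundedChoice.

Fixpoint prefix_max (h : nat -> nat) (k : nat) : nat :=
  match k with 0 => 0 | S k => Nat.max (prefix_max h k) (h k) end.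

Lemma le_prefix_max h i k : i < k -> h i <= prefix_max h k.
Proof.
  induction k as [|k IH]; simpl; intros Hi; [lia|].
  destruct (Nat.eq_dec i k) as [->|]; [lia|]. specialize (IH ltac:(lia)); lia.
Qed.

Lemma prefix_max_le h k x : (forall i, i < k -> h i <= x) -> prefix_max h k <= x.
Proof.
  induction k as [|k IH]; simpl; intros Hh; [lia|].
  specialize (IH (fun i Hi => Hh i ltac:(lia))); specialize (Hh k ltac:(lia)); lia.
Qed.

Lemma prefix_max_mono h i k : i <= k -> prefix_max h i <= prefix_max h k.
Proof. induction 1; simpl; lia. Qed.

Lemma common_index_bound {T : Type} (M : nat -> nat) (h : T -> nat) c n l :
  (forall i j, i <= j -> M i <= M j) -> M c <= n ->
  (forall x, In x l -> M (h x) <= n) ->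
  exists K, c <= K /\ M K <= n /\ forall x, In x l -> h x <= K.
Proof.
  intros M_mono Mc Ml; induction l as [|x l IH].
  - exists c; repeat split; auto; intros x [].
  - destruct IH as [K [cK [MK lK]]]; [intros y Hy; apply Ml; right; exact Hy|].
    exists (Nat.max K (h x)); repeat split; [lia| |].
    + destruct (Nat.max_spec K (h x)) as [[_ ->]|[_ ->]]; auto; apply Ml; left; auto.
    + intros y [<-|Hy]; [lia|]; specialize (lK y Hy); lia.
Qed.

Section CountableSegments.

Variables (W : Type) (lt : W -> W -> Prop).
Hypothesis lt_trans : forall a b c, lt a b -> lt b c -> lt a c.
Hypothesis lt_total : forall a b, lt a b \/ a = b \/ lt b a.
Hypothesis segments_countable :
  forall a : W, exists f : {b : W | lt b a} -> nat, injective f.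

Definition F_col (be : W) (r : W -> nat) (n : nat) (x : W) : Prop :=
  lt x be /\ r x <= n.

Definition covered (P : W -> Prop) : Prop := exists l, forall x, P x -> In x l.

Definition scaled_card_le (c : nat) (P : W -> Prop) (n : nat) : Prop :=
  forall l, NoDup l -> (forall x, In x l -> P x) -> c * length l <= n.

(* [R b] is the column rho(.,b) for b < be, and [r] a candidate for rho(.,be). *)
Record good_column (be : W) (R : W -> W -> nat) (r : W -> nat) : Prop := {
  gc_ultra_top : forall a b, lt a b -> lt b be -> r a <= Nat.max (R b a) (r b);
  gc_ultra_mid : forall a b, lt a b -> lt b be -> R b a <= Nat.max (r a) (r b);
  gc_covered : forall n, covered (F_col be r n);
  gc_sparse : forall c, exists m, forall n, m <= n -> scaled_card_le c (F_col be r n) n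
}.

Lemma good_column_local be R R' r :
  (forall b, lt b be -> R b = R' b) -> good_column be R r -> good_column be R' r.
Proof.
  intros E [top mid cov sparse]; split; auto.
  - intros a b Hab Hb; rewrite <- (E b Hb); auto.
  - intros a b Hab Hb; rewrite <- (E b Hb); auto.
Qed.

Lemma covered_of_bounded_union (P : W -> Prop) (Q : nat -> W -> Prop) K :
  (forall x, P x -> exists k, k <= K /\ Q k x) -> (forall k, covered (Q k)) ->
  covered P.
Proof.
  intros PQ HQ; revert P PQ; induction K as [|K IH]; intros P PQ.
  - destruct (HQ 0) as [l Hl]; exists l; intros x Px.
    destruct (PQ x Px) as [k [Hk Qx]]; replace k with 0 in Qx by lia; auto.
  - destruct (HQ (S K)) as [l1 Hl1].
    destruct (IH (fun x => exists k, k <= K /\ Q k x)) as [l2 Hl2]; auto.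
    exists (l1 ++ l2); intros x Px; apply in_or_app.
    destruct (PQ x Px) as [k [Hk Qx]].
    destruct (Nat.eq_dec k (S K)) as [->|]; [left; auto|right; apply Hl2; exists k; split; auto; lia].
Qed.

Lemma scaled_card_le_add1 c (P Q : W -> Prop) p n :
  (forall x, P x -> Q x \/ x = p) -> scaled_card_le (2 * c) Q n -> 2 * c <= n ->
  scaled_card_le c P n.
Proof.
  intros PQ HQ Hn l Hnd Hl.
  destruct (classic (In p l)) as [Hin|Hin].
  - destruct (in_split _ _ Hin) as [l1 [l2 ->]].
    assert (2 * c * length (l1 ++ l2) <= n).
    { apply HQ; [exact (NoDup_remove_1 _ _ _ Hnd)|].
      intros x Hx; destruct (PQ x) as [| ->]; auto.
      - apply Hl; apply in_app_or in Hx; apply in_or_app; simpl; tauto.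
      - exfalso; exact (NoDup_remove_2 _ _ _ Hnd Hx). }
    rewrite length_app in *; simpl; nia.
  - assert (2 * c * length l <= n).
    { apply HQ; auto; intros x Hx; destruct (PQ x (Hl x Hx)) as [| ->]; tauto. }
    nia.
Qed.

Lemma empty_good_column be R :
  (forall b, ~ lt b be) -> good_column be R (fun _ => 0).
Proof.
  intros Hbe; split.
  - intros a b _ Hb; destruct (Hbe b Hb).
  - intros a b _ Hb; destruct (Hbe b Hb).
  - intros n; exists []; intros x [Hx _]; destruct (Hbe x Hx).
  - intros c; exists 0; intros n _ [|x l] _ Hl; simpl; [lia|].
    destruct (Hl x (or_introl eq_refl)) as [Hx _]; destruct (Hbe x Hx).
Qed.

Lemma succ_good_column be p R :
  (forall b, lt b be -> lt b p \/ b = p) -> good_column p R (R p) ->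
  good_column be R (R p).
Proof.
  intros p_max [top mid cov sparse]; split.
  - intros a b Hab Hb; destruct (p_max b Hb) as [| <-]; [apply top|]; auto; lia.
  - intros a b Hab Hb; destruct (p_max b Hb) as [| <-]; [apply mid|]; auto; lia.
  - intros n; destruct (cov n) as [l Hl]; exists (p :: l); intros x [Hx Hr].
    destruct (p_max x Hx) as [| <-]; [right; apply Hl; split|left]; auto.
  - intros c; destruct (sparse (2 * c)) as [m Hm]; exists (Nat.max m (2 * c)).
    intros n Hn; apply scaled_card_le_add1 with (F_col p (R p) n) p; [|apply Hm|]; try lia.
    intros x [Hx Hr]; destruct (p_max x Hx) as [| <-]; [left; split|right]; auto.
Qed.

Lemma limit_above_both be x y :
  is_limit lt be -> lt x be -> lt y be -> exists c, lt x c /\ lt y c /\ lt c be.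
Proof.
  intros [_ Hl] Hx Hy; destruct (lt_total x y) as [Hxy|[<-|Hyx]].
  - destruct (Hl y Hy) as [c [Hyc Hc]]; exists c; eauto.
  - destruct (Hl x Hx) as [c [Hxc Hc]]; exists c; eauto.
  - destruct (Hl x Hx) as [c [Hxc Hc]]; exists c; eauto.
Qed.

Lemma limit_cofinal_sequence be : is_limit lt be ->
  exists g : nat -> W, (forall k, lt (g k) be) /\ (forall k, lt (g k) (g (S k))) /\
    (forall a, lt a be -> exists k, lt a (g k)).
Proof.
  intros Hl; pose proof Hl as [[b0 Hb0] _].
  destruct (segments_countable be) as [code Hcode].
  pose (Next x k c := lt x be ->
    lt x c /\ lt c be /\ forall b (p : lt b be), code (exist _ b p) = k -> lt b c).
  assert (next_ex : forall x k, exists c, Next x k c).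
  { intros x k; destruct (classic (lt x be)) as [Hx|Hx]; [|exists x; intros H; contradiction].
    destruct (classic (exists b (p : lt b be), code (exist _ b p) = k))
      as [[b [p Hb]]|Hno].
    - destruct (limit_above_both be x b Hl Hx p) as [c [Hxc [Hbc Hc]]].
      exists c; intros _; repeat split; auto; intros b' p' Hb'.
      rewrite <- Hb in Hb'; apply Hcode in Hb'.
      apply (f_equal (@proj1_sig _ _)) in Hb'; simpl in Hb'; subst b'; exact Hbc.
    - destruct (limit_above_both be x x Hl Hx Hx) as [c [Hxc [_ Hc]]].
      exists c; intros _; repeat split; auto; intros b' p' Hb'.
      exfalso; apply Hno; eauto. }
  pose (next x k := epsilon (inhabits x) (Next x k)).
  assert (next_spec : forall x k, Next x k (next x k))
    by (intros x k; apply epsilon_spec, next_ex).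
  pose (g := fix g k := match k with 0 => b0 | S j => next (g j) j end).
  assert (g_below : forall k, lt (g k) be).
  { induction k as [|k IH]; [exact Hb0|apply (next_spec (g k) k IH)]. }
  exists g; repeat split; auto.
  - intros k; apply (next_spec (g k) k (g_below k)).
  - intros a Ha; exists (S (code (exist _ a Ha))).
    apply (next_spec _ _ (g_below _)) with Ha; reflexivity.
Qed.

Section Limit.

Variables (be : W) (R : W -> W -> nat) (g : nat -> W).
Hypothesis R_good : forall x, lt x be -> good_column x R (R x).
Hypothesis g_below : forall k, lt (g k) be.
Hypothesis g_step : forall k, lt (g k) (g (S k)).
Hypothesis g_cofinal : forall a, lt a be -> exists k, lt a (g k).

Lemma g_mono i k : i < k -> lt (g i) (g k).
Proof. induction 1; eauto. Qed.

Definition sparse_threshold k : nat := epsilon (inhabits 0) (fun m =>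
  forall n, m <= n -> scaled_card_le k (F_col (g k) (R (g k)) n) n).

Lemma sparse_threshold_spec k n :
  sparse_threshold k <= n -> scaled_card_le k (F_col (g k) (R (g k)) n) n.
Proof.
  revert n; apply (epsilon_spec (inhabits 0) (fun m => forall n, m <= n -> _)).
  apply (gc_sparse _ _ _ (R_good _ (g_below k))).
Qed.

Definition block_bound j : nat :=
  Nat.max j (Nat.max (sparse_threshold j) (prefix_max (fun i => R (g j) (g i)) j)).

Definition level_bound k : nat := prefix_max block_bound (S k).

Lemma level_bound_mono i k : i <= k -> level_bound i <= level_bound k.
Proof. intros; apply prefix_max_mono; lia. Qed.

Lemma block_bound_le_level_bound k : block_bound k <= level_bound k.
Proof. apply le_prefix_max; lia. Qed.

Definition block a : nat := epsilon (inhabits 0) (fun k =>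
  lt a (g k) /\ forall i, lt a (g i) -> k <= i).

Lemma block_spec a : lt a be ->
  lt a (g (block a)) /\ forall i, lt a (g i) -> block a <= i.
Proof.
  intros Ha; unfold block; apply epsilon_spec.
  destruct (dec_inh_nat_subset_has_unique_least_element (fun k => lt a (g k)))
    as [k [[Hk Hmin] _]]; eauto.
  intros k; apply classic.
Qed.

Lemma block_mono a b : lt a b -> lt b be -> block a <= block b.
Proof.
  intros Hab Hb; apply (block_spec a (lt_trans _ _ _ Hab Hb)).
  exact (lt_trans _ _ _ Hab (proj1 (block_spec b Hb))).
Qed.

Lemma g_le_of_lt_block a i : lt a be -> i < block a -> g i = a \/ lt (g i) a.
Proof.
  intros Ha Hi; destruct (lt_total a (g i)) as [H|[H|H]]; auto.
  apply (block_spec a Ha) in H; lia.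
Qed.

(* The guard matters for i = block a - 1, where g i may equal a. *)
Definition limit_column a : nat :=
  Nat.max (level_bound (block a)) (Nat.max (R (g (block a)) a)
    (prefix_max (fun i => if excluded_middle_informative (lt (g i) a)
                          then R a (g i) else 0) (block a))).

Lemma level_bound_le_limit_column a : level_bound (block a) <= limit_column a.
Proof. unfold limit_column; lia. Qed.

Lemma R_block_le_limit_column a : R (g (block a)) a <= limit_column a.
Proof. unfold limit_column; lia. Qed.

Lemma R_lower_le_limit_column a i :
  i < block a -> lt (g i) a -> R a (g i) <= limit_column a.
Proof.
  intros Hi Hga; unfold limit_column.
  pose proof (le_prefix_max (fun i => if excluded_middle_informative (lt (g i) a)
                          then R a (g i) else 0) i (block a) Hi) as H; simpl in H.
  destruct (excluded_middle_informative (lt (g i) a)); [lia|contradiction].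
Qed.

Lemma limit_column_le a x :
  level_bound (block a) <= x -> R (g (block a)) a <= x ->
  (forall i, i < block a -> lt (g i) a -> R a (g i) <= x) -> limit_column a <= x.
Proof.
  intros H1 H2 H3; unfold limit_column.
  enough (prefix_max (fun i => if excluded_middle_informative (lt (g i) a)
                          then R a (g i) else 0) (block a) <= x) by lia.
  apply prefix_max_le; intros i Hi.
  destruct (excluded_middle_informative (lt (g i) a)); auto; lia.
Qed.

Lemma limit_ultra_top a b : lt a b -> lt b be ->
  limit_column a <= Nat.max (R b a) (limit_column b).
Proof.
  intros Hab Hb; pose proof (lt_trans _ _ _ Hab Hb) as Ha.
  pose proof (block_mono a b Hab Hb) as Hkl.
  destruct (block_spec a Ha) as [Hak _]; destruct (block_spec b Hb) as [Hbl _].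
  apply limit_column_le.
  - pose proof (level_bound_mono _ _ Hkl); pose proof (level_bound_le_limit_column b); lia.
  - destruct (Nat.eq_dec (block a) (block b)) as [E|E].
    + rewrite E in *; pose proof (gc_ultra_top _ _ _ (R_good _ (g_below _)) a b Hab Hbl).
      pose proof (R_block_le_limit_column b); lia.
    + destruct (g_le_of_lt_block b (block a) Hb ltac:(lia)) as [->|Hgb]; [lia|].
      pose proof (gc_ultra_mid _ _ _ (R_good b Hb) a _ Hak Hgb).
      pose proof (R_lower_le_limit_column b (block a) ltac:(lia) Hgb); lia.
  - intros i Hi Hga.
    pose proof (gc_ultra_mid _ _ _ (R_good b Hb) _ a Hga Hab).
    pose proof (R_lower_le_limit_column b i ltac:(lia) (lt_trans _ _ _ Hga Hab)); lia.
Qed.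

Lemma limit_ultra_mid a b : lt a b -> lt b be ->
  R b a <= Nat.max (limit_column a) (limit_column b).
Proof.
  intros Hab Hb; pose proof (lt_trans _ _ _ Hab Hb) as Ha.
  pose proof (block_mono a b Hab Hb) as Hkl.
  destruct (block_spec a Ha) as [Hak _]; destruct (block_spec b Hb) as [Hbl _].
  pose proof (R_block_le_limit_column a).
  destruct (Nat.eq_dec (block a) (block b)) as [E|E].
  - pose proof (R_block_le_limit_column b); rewrite E in *.
    pose proof (gc_ultra_mid _ _ _ (R_good _ (g_below _)) a b Hab Hbl); lia.
  - destruct (g_le_of_lt_block b (block a) Hb ltac:(lia)) as [<-|Hgb]; [lia|].
    pose proof (gc_ultra_top _ _ _ (R_good b Hb) a _ Hak Hgb).
    pose proof (R_lower_le_limit_column b (block a) ltac:(lia) Hgb); lia.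
Qed.

Lemma limit_covered n : covered (F_col be limit_column n).
Proof.
  apply (covered_of_bounded_union _ (fun k => F_col (g k) (R (g k)) n) n).
  - intros x [Hx Hr]; exists (block x).
    pose proof (block_bound_le_level_bound (block x)); unfold block_bound in *.
    pose proof (level_bound_le_limit_column x); pose proof (R_block_le_limit_column x).
    repeat split; [lia|apply (block_spec x Hx)|lia].
  - intros k; apply (gc_covered _ _ _ (R_good _ (g_below k))).
Qed.

Lemma limit_sparse c : exists m, forall n, m <= n ->
  scaled_card_le c (F_col be limit_column n) n.
Proof.
  exists (level_bound c); intros n Hn l Hnd Hl.
  destruct (common_index_bound level_bound block c n l level_bound_mono Hn)
    as [K [HcK [HKn HlK]]].
  { intros x Hx; destruct (Hl x Hx) as [_ Hr].
    pose proof (level_bound_le_limit_column x); lia. }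
  pose proof (block_bound_le_level_bound K) as HK; unfold block_bound in HK.
  enough (K * length l <= n) by nia.
  apply sparse_threshold_spec; [lia|exact Hnd|].
  intros x Hx; destruct (Hl x Hx) as [Hxb Hr]; specialize (HlK x Hx).
  destruct (block_spec x Hxb) as [Hxk _]; pose proof (R_block_le_limit_column x).
  destruct (Nat.eq_dec (block x) K) as [<-|E]; [split; auto; lia|].
  assert (Hlt : block x < K) by lia.
  split; [exact (lt_trans _ _ _ Hxk (g_mono _ _ Hlt))|].
  pose proof (gc_ultra_top _ _ _ (R_good _ (g_below K)) x _ Hxk (g_mono _ _ Hlt)).
  pose proof (le_prefix_max (fun i => R (g K) (g i)) _ _ Hlt); simpl in *; lia.
Qed.

Lemma limit_good_column : good_column be R limit_column.
Proof.
  split; [exact limit_ultra_top|exact limit_ultra_mid|exact limit_covered|exact limit_sparse].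
Qed.

End Limit.

Lemma zero_succ_or_limit be : (forall b, ~ lt b be) \/
  (exists p, lt p be /\ forall b, lt b be -> lt b p \/ b = p) \/ is_limit lt be.
Proof.
  destruct (classic (exists b, lt b be)) as [Hne|Hz]; [right|left; eauto].
  destruct (classic (exists p, lt p be /\ forall b, lt b be -> ~ lt p b))
    as [[p [Hp Hmax]]|Hnmax].
  - left; exists p; split; auto; intros b Hb.
    destruct (lt_total b p) as [|[|H]]; auto; destruct (Hmax b Hb H).
  - right; split; auto; intros b Hb.
    apply NNPP; intros Hno; apply Hnmax; exists b; split; eauto.
Qed.

Lemma good_column_exists be R :
  (forall x, lt x be -> good_column x R (R x)) -> exists r, good_column be R r.
Proof.
  intros R_good; destruct (zero_succ_or_limit be) as [Hz|[[p [Hp Hmax]]|Hl]].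
  - exists (fun _ => 0); apply empty_good_column; auto.
  - exists (R p); apply succ_good_column; auto.
  - destruct (limit_cofinal_sequence be Hl) as [g [g_below [g_step g_cofinal]]].
    exists (limit_column R g); apply limit_good_column; auto.
Qed.

Hypothesis lt_wf : well_founded lt.

Lemma good_columns_exist : exists R : W -> W -> nat, forall be, good_column be R (R be).
Proof.
  apply (wf_recursive_choice W (W -> nat) lt (fun _ => 0) lt_wf good_column).
  - exact good_column_local.
  - exact good_column_exists.
Qed.

Lemma good_column_smooth be R r : good_column be R r ->
  exists C, forall n, 1 <= n -> card_le (F_col be r n) (C * n).
Proof.
  intros [_ _ cov sparse]; destruct (sparse 1) as [m Hm]; destruct (cov m) as [L HL].
  exists (S (length L)); intros n Hn l Hnd Hl.
  destruct (Nat.le_gt_cases m n) as [Hmn|Hmn].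
  - specialize (Hm n Hmn l Hnd Hl); nia.
  - assert (length l <= length L); [|nia].
    apply NoDup_incl_length; auto; intros x Hx.
    destruct (Hl x Hx); apply HL; split; auto; lia.
Qed.

End CountableSegments.

Theorem mainTheorem18 (W : Type) (lt : W -> W -> Prop) (Hw : is_omega1 W lt) :
  exists rho : W -> W -> nat, is_rho_function lt rho /\ smooth lt rho.
Proof.
  destruct (good_columns_exist W lt (o1_trans _ _ Hw) (o1_total _ _ Hw)
              (o1_segments_countable _ _ Hw) (o1_wf _ _ Hw)) as [R HR].
  exists (fun a b => R b a); split; [split; [|split]|].
  - intros a b c; apply (gc_ultra_top _ _ _ _ _ (HR c)).
  - intros a b c; apply (gc_ultra_mid _ _ _ _ _ (HR c)).
  - intros b n; destruct (gc_covered _ _ _ _ _ (HR b) n) as [l Hl].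
    exists l; intros a Ha Hr; apply Hl; split; auto.
  - intros lam _; exact (good_column_smooth _ _ _ _ _ (HR lam)).
Qed.
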